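(* Let $n,r\ge 1$ be integers, let $u$ be a vertex of $G(n,r)$, let $0\le k\le r$, and let $(i_1,j_1),\dots,(i_k,j_k)$ be positions in an $n\times n$ matrix (not necessarily distinct) such that $u\ge E_n(i_1,j_1)+\dots+E_n(i_k,j_k)$ entrywise. Then there exist vertices $u_1,\dots,u_r$ of $G(n,1)$ (i.e. $n\times n$ permutation matrices) with $u=u_1+\dots+u_r$ and such that $u_1+\dots+u_l\ge E_n(i_1,j_1)+\dots+E_n(i_l,j_l)$ entrywise for every $1\le l\le k$.
   Context: For integers $n,r\ge 1$, $G(n,r)$ is the graph whose vertices are the $n\times n$ matrices with non-negative integer entries all of whose row sums and column sums equal $r$ (adjacency is irrelevant here). $E_n(i,j)$ denotes the $n\times n$ matrix with all entries $0$ except the entry in position $(i,j)$, which is $1$. Matrix inequalities are entrywise. *)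

From mathcomp Require Import all_boot all_order all_algebra.
Set Implicit Arguments. Unset Strict Implicit. Unset Printing Implicit Defensive.

Definition is_vertex (n r : nat) (u : 'M[nat]_n) : Prop :=
  (forall i : 'I_n, (\sum_(j < n) u i j)%N = r) /\
  (forall j : 'I_n, (\sum_(i < n) u i j)%N = r).

Definition Emat (n : nat) (i j : 'I_n) : 'M[nat]_n :=
  \matrix_(a < n, b < n) (((a == i) && (b == j)) : nat).

Definition mx_le (n : nat) (A B : 'M[nat]_n) : Prop :=
  forall a b : 'I_n, (A a b <= B a b)%N.

From mathcomp Require Import all_boot all_order all_algebra all_fingroup zify.
Set Implicit Arguments. Unset Strict Implicit. Unset Printing Implicit Defensive.

(* The proof strengthens the statement so that it admits an induction on r.
   Instead of the prefix sums of the E(i_t,j_t) we carry an arbitrary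
   "lower chain" C_0 = 0, C_1, ..., C_k of matrices bounded by u, each of
   which exceeds its predecessor by at most one unit at position
   (i_l,j_l).  Given such a chain, choose a permutation matrix P <= u that
   covers C_1 (possible because C_1 <= E(i_1,j_1) and C_1 <= u); then
   u - P is a vertex of G(n,r-1) and (C_{l+1} - P)_l is a lower chain for
   it, so induction applies and P is prepended to the decomposition.

   The permutation matrix is produced by the integer Birkhoff–von Neumann
   decomposition: a vertex of G(n,r), r > 0, dominates some permutation
   matrix (Hall's marriage theorem applied to its support, via double
   counting), and peeling such matrices off one at a time decomposes u;
   one of the summands is nonzero wherever u is. *)

Section HallMarriage.

Variables T1 T2 : finType.
Implicit Types (R : T1 -> T2 -> bool) (A S : {set T1}) (Y : {set T2}).

Definition nbr R S : {set T2} := [set y | [exists x in S, R x y]].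
Definition avoid R Y : T1 -> T2 -> bool := fun x y => R x y && (y \notin Y).
Definition hall_cond R A : Prop := forall S, S \subset A -> #|S| <= #|nbr R S|.
Definition matching R A (f : T1 -> T2) : Prop :=
  {in A &, injective f} /\ {in A, forall x, R x (f x)}.

Lemma matching0 R f : matching R set0 f.
Proof. by split=> x; rewrite inE. Qed.

Lemma hall_condS R A S : hall_cond R A -> S \subset A -> hall_cond R S.
Proof. by move=> hA sSA S' sS'S; apply/hA/(subset_trans sS'S). Qed.

Lemma matching_glue R A S Y f1 f2 :
    matching (fun x y => R x y && (y \in Y)) S f1 ->
    matching (avoid R Y) (A :\: S) f2 ->
  matching R A (fun x => if x \in S then f1 x else f2 x).
Proof.
move=> [inj1 R1] [inj2 R2].
have inY x : x \in S -> f1 x \in Y by move=> /R1 /andP[].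
have notinY x : x \in A -> x \notin S -> f2 x \notin Y.
  by move=> xA xS; have /andP[] := R2 x (ltac:(by rewrite inE xS xA)).
split=> [x1 x2 x1A x2A /=|x xA /=].
  case: ifPn => h1; case: ifPn => h2 e.
  - exact: inj1.
  - by have := notinY _ x2A h2; rewrite -e inY.
  - by have := notinY _ x1A h1; rewrite e inY.
  - by apply: inj2; rewrite ?inE ?h1 ?h2 ?x1A ?x2A.
case: ifPn => [/R1 /andP[]//|xS].
by have /andP[] := R2 x (ltac:(by rewrite inE xS xA)).
Qed.

Lemma hall_tight R A S : hall_cond R A -> S \subset A ->
  #|nbr R S| <= #|S| -> hall_cond (avoid R (nbr R S)) (A :\: S).
Proof.
move=> hA sSA tight S' sS'.
have /eqP cardU : #|S' :|: S| == #|S'| + #|S|.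
  rewrite (leq_card_setU S' S).2 disjoint_subset.
  by apply: subset_trans sS' _; apply/subsetP => x; rewrite !inE => /andP[].
have sub : nbr R (S' :|: S) \subset nbr (avoid R (nbr R S)) S' :|: nbr R S.
  apply/subsetP => y; rewrite in_setU.
  case yN: (y \in nbr R S); rewrite ?orbT // orbF.
  rewrite !inE => /existsP[x /andP[xS'S Rxy]].
  apply/existsP; exists x; rewrite /avoid Rxy yN andbT.
  case/setUP: xS'S => // xS; suff: y \in nbr R S by rewrite yN.
  by rewrite inE; apply/existsP; exists x; rewrite xS.
have := hA (S' :|: S) (ltac:(by rewrite subUset sSA (subset_trans sS' (subsetDl _ _)))).
rewrite cardU.
have := leq_trans (subset_leq_card sub) (leq_card_setU _ _).1; lia.
Qed.

Lemma hall_surplus R A a b :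
    (forall S, S \subset A -> S != set0 -> S != A -> #|S| < #|nbr R S|) ->
    a \in A ->
  hall_cond (avoid R [set b]) (A :\ a).
Proof.
move=> surplus aA S sS.
have [-> | S0] := eqVneq S set0; first by rewrite cards0.
have sSA : S \subset A := subset_trans sS (subD1set _ _).
have SA : S != A by apply: contraTneq sS => ->; apply/subsetPn; exists a; rewrite ?inE ?eqxx.
have sub : nbr R S \subset nbr (avoid R [set b]) S :|: [set b].
  apply/subsetP => y; rewrite !inE => /existsP[x /andP[xS Rxy]].
  case: (eqVneq y b) => [->|yb]; rewrite ?eqxx ?orbT // orbF.
  by apply/existsP; exists x; rewrite xS /avoid Rxy inE yb.
have := leq_trans (subset_leq_card sub) (leq_card_setU _ _).1.
have := surplus S sSA S0 SA; rewrite cards1; lia.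
Qed.

(* A default value is needed to build a total map when A is empty. *)
Variable y0 : T2.

(* Hall's marriage theorem, by strong induction on |A|: split along a
   tight proper subset if there is one, otherwise match one element. *)
Theorem hall_marriage R A : hall_cond R A -> exists f, matching R A f.
Proof.
move: {2}#|A| (leqnn #|A|) => m; elim: m => [|m IH] in R A *.
  rewrite leqn0 cards_eq0 => /eqP -> _; exists (fun _ => y0); exact: matching0.
move=> hA hall.
have [-> | [a aA]] := set_0Vmem A; first by exists (fun _ => y0); exact: matching0.
case: (boolP [exists S : {set T1},
               [&& S \subset A, S != set0, S != A & #|nbr R S| <= #|S|]]).
  case/existsP => S /and4P[sSA S0 SA tight].
  have ltSA : #|S| < #|A| by apply: proper_card; rewrite properEneq SA sSA.
  have [f1 [inj1 R1]] := IH R S (ltac:(lia)) (hall_condS hall sSA).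
  have [|f2 match2] := IH _ (A :\: S) _ (hall_tight hall sSA tight).
    by rewrite cardsD (setIidPr sSA); move: S0; rewrite -card_gt0; lia.
  exists (fun x => if x \in S then f1 x else f2 x).
  apply: matching_glue match2; split=> // x xS.
  by rewrite R1 //= inE; apply/existsP; exists x; rewrite xS R1.
rewrite negb_exists => /forallP no_tight.
have surplus S : S \subset A -> S != set0 -> S != A -> #|S| < #|nbr R S|.
  by move=> sSA S0 SA; have := no_tight S; rewrite sSA S0 SA ltnNge.
have : 0 < #|nbr R [set a]| by rewrite -(cards1 a); apply: hall; rewrite sub1set.
rewrite card_gt0 => /set0Pn[b]; rewrite inE => /existsP[a' /andP[]].
rewrite inE => /eqP -> Rab.
have [|f2 match2] := IH _ (A :\ a) _ (hall_surplus b surplus aA).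
  by move: hA; rewrite (cardsD1 a A) aA; lia.
exists (fun x => if x \in [set a] then b else f2 x).
apply: matching_glue match2; split=> [x1 x2 | x].
  by rewrite !inE => /eqP -> /eqP ->.
by rewrite inE => /eqP ->; rewrite Rab inE eqxx.
Qed.

End HallMarriage.

Lemma sum_prefix_le (F : nat -> nat) l k : l <= k ->
  \sum_(0 <= t < l) F t <= \sum_(0 <= t < k) F t.
Proof. by move=> lk; rewrite (big_cat_nat (leq0n l) lk) leq_addr. Qed.

Lemma summand_le (F : nat -> nat) t k : t < k -> F t <= \sum_(0 <= i < k) F i.
Proof.
move=> tk; apply: leq_trans (sum_prefix_le F tk).
by rewrite big_nat_recr //= leq_addl.
Qed.

Section NatMatrices.

Variable n : nat.
Implicit Types (u P A B : 'M[nat]_n) (r s : nat).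

Definition perm_nat_mx (p : {perm 'I_n}) : 'M[nat]_n := \matrix_(i, j) (p i == j : nat).

Definition subn_mx A B : 'M[nat]_n := \matrix_(i, j) (A i j - B i j).

Lemma mx_le_refl A : mx_le A A.
Proof. by move=> a b. Qed.

Lemma sum_indicator (x : 'I_n) : \sum_(j < n) (j == x : nat) = 1.
Proof. by rewrite (bigD1 x) //= eqxx big1 // => j /negbTE ->. Qed.

Lemma perm_nat_mx_vertex (p : {perm 'I_n}) : is_vertex 1 (perm_nat_mx p).
Proof.
split=> [i|j].
  under eq_bigr do rewrite mxE eq_sym; exact: sum_indicator.
under eq_bigr do rewrite mxE -(inj_eq (@perm_inj _ p^-1)) permK.
exact: sum_indicator.
Qed.

Lemma addn_subn_mx A B : mx_le B A -> (B + subn_mx A B)%R = A.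
Proof. by move=> BA; apply/matrixP => i j; rewrite !mxE; exact: subnKC. Qed.

Lemma vertex_subn_mx r s u P : mx_le P u -> is_vertex s P -> is_vertex (r + s) u ->
  is_vertex r (subn_mx u P).
Proof.
move=> Pu [Prow Pcol] [urow ucol]; split=> [i|j].
  by under eq_bigr do rewrite mxE; rewrite sumnB ?urow ?Prow ?addnK.
by under eq_bigr do rewrite mxE; rewrite sumnB ?ucol ?Pcol ?addnK.
Qed.

Lemma vertex0 u : is_vertex 0 u -> u = 0%R.
Proof.
move=> [urow _]; apply/matrixP => i j; rewrite mxE.
by have /eqP := urow i; rewrite sum_nat_eq0 => /forallP /(_ j) /eqP.
Qed.

(* The support of a vertex of G(n,r), r > 0, satisfies Hall's condition:
   r|S| counts the mass of the rows in S, which all lies in the columns of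
   N(S), whose total mass is r|N(S)|. *)
Lemma vertex_hall r u : 0 < r -> is_vertex r u ->
  hall_cond (fun i j => 0 < u i j) [set: 'I_n].
Proof.
move=> r_gt0 [urow ucol] S _; set N := nbr _ S.
suff : #|S| * r <= #|N| * r by rewrite leq_pmul2r.
have -> : #|S| * r = \sum_(i in S) \sum_(j < n) u i j.
  by rewrite -sum_nat_const; apply: eq_bigr => i _; rewrite urow.
have -> : #|N| * r = \sum_(j in N) \sum_(i < n) u i j.
  by rewrite -sum_nat_const; apply: eq_bigr => j _; rewrite ucol.
rewrite [leqRHS]exchange_big /= [leqRHS](bigID (mem S)) /= -[leqLHS]addn0 leq_add //.
apply: leq_sum => i iS.
rewrite [leqLHS](bigID (mem N)) /= [X in _ + X]big1 ?addn0 // => j jN.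
apply/eqP; rewrite -leqn0 leqNgt; apply: contra jN => uij.
by rewrite inE; apply/existsP; exists i; rewrite iS.
Qed.

End NatMatrices.

Section Decompositions.

Variable n : nat.
Hypothesis n_gt0 : 0 < n.
Implicit Types (u P : 'M[nat]_n) (r k : nat) (pos : nat -> 'I_n * 'I_n)
               (C : nat -> 'M[nat]_n).

Lemma vertex_perm_below r u : 0 < r -> is_vertex r u ->
  exists p : {perm 'I_n}, mx_le (perm_nat_mx p) u.
Proof.
move=> r_gt0 hu.
have [f [f_inj f_supp]] := hall_marriage (Ordinal n_gt0) (vertex_hall r_gt0 hu).
have inj : injective f by move=> x y; apply: f_inj; rewrite inE.
exists (perm inj) => i j; rewrite mxE permE.
by case: eqP => // <-; apply: f_supp; rewrite inE.
Qed.

Lemma birkhoff r u : is_vertex r u ->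
  exists us : nat -> 'M[nat]_n,
    (forall t, t < r -> is_vertex 1 (us t)) /\ u = (\sum_(0 <= t < r) us t)%R.
Proof.
elim: r u => [|r IH] u hu.
  by exists (fun _ => 0%R); split => //; rewrite big_geq //; exact: vertex0.
have [p pu] := vertex_perm_below (ltn0Sn r) hu.
have hu' : is_vertex r (subn_mx u (perm_nat_mx p)).
  by apply: vertex_subn_mx pu (perm_nat_mx_vertex p) _; rewrite addn1.
have [us [us_vert us_sum]] := IH _ hu'.
exists (fun t => if t is t'.+1 then us t' else perm_nat_mx p); split.
  by case=> [|t] /= ht; [exact: perm_nat_mx_vertex | exact: us_vert].
by rewrite big_nat_recl //= -us_sum addn_subn_mx.
Qed.

Lemma vertex_perm_through r u a b : 0 < r -> is_vertex r u ->
  exists P, [/\ is_vertex 1 P, mx_le P u & 0 < u a b -> 0 < P a b].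
Proof.
move=> r_gt0 hu; have [us [us_vert us_sum]] := birkhoff hu.
have entry_sum i j : u i j = \sum_(0 <= t < r) us t i j by rewrite us_sum summxE.
have us_le t : t < r -> mx_le (us t) u.
  by move=> tr i j; rewrite entry_sum (summand_le (fun t => us t i j)).
case: (boolP [exists t : 'I_r, 0 < us t a b]) => [/existsP[t ht] | /existsPn none].
  by exists (us t); split => //; [exact: us_vert | exact: us_le].
exists (us 0); split => [||uab]; [exact: us_vert | exact: us_le |].
move: uab; rewrite entry_sum big_mkord big1 // => t _.
by have := none t; rewrite lt0n negbK => /eqP.
Qed.

Definition lower_chain k pos u C : Prop :=
  [/\ C 0 = 0%R, forall l, l <= k -> mx_le (C l) u &
      forall l, l < k -> mx_le (C l.+1) (C l + Emat (pos l).1 (pos l).2)%R].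

Lemma chain_first_perm r k pos u C : 0 < r -> is_vertex r u ->
    lower_chain k.+1 pos u C ->
  exists P, [/\ is_vertex 1 P, mx_le P u & mx_le (C 1) P].
Proof.
move=> r_gt0 hu [C0 Cu Cs].
have [P [P_vert Pu P_pos]] := vertex_perm_through (pos 0).1 (pos 0).2 r_gt0 hu.
exists P; split => // a b.
have := Cs 0 (ltn0Sn k) a b; rewrite C0 !mxE GRing.add0r.
case: (boolP ((a == (pos 0).1) && (b == (pos 0).2))) => [|_]; last first.
  by rewrite leqn0 => /eqP ->.
case/andP => /eqP -> /eqP -> C1_le1.
case: (posnP (C 1 (pos 0).1 (pos 0).2)) => [-> // | C1_pos].
have := P_pos (leq_trans C1_pos (Cu 1 (ltn0Sn k) _ _)); lia.
Qed.

Lemma chain_shift k pos u C P : lower_chain k.+1 pos u C ->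
    mx_le P u -> mx_le (C 1) P ->
  lower_chain k (fun t => pos t.+1) (subn_mx u P) (fun l => subn_mx (C l.+1) P).
Proof.
move=> [C0 Cu Cs] Pu C1P; split.
- by apply/matrixP => a b; rewrite !mxE; apply/eqP; rewrite subn_eq0.
- by move=> l lk a b; rewrite !mxE leq_sub2r // Cu.
- move=> l lk a b; have := Cs l.+1 lk a b; rewrite !mxE /=; lia.
Qed.

Theorem refined_decomposition r u k pos C :
    is_vertex r u -> k <= r -> lower_chain k pos u C ->
  exists us : nat -> 'M[nat]_n,
    [/\ forall t, t < r -> is_vertex 1 (us t), u = (\sum_(0 <= t < r) us t)%R &
        forall l, l <= k -> mx_le (C l) (\sum_(0 <= t < l) us t)%R].
Proof.
elim: r u k pos C => [|r IH] u [|k] pos C hu hk [C0 Cu Cs] //.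
1,2: have [us [us_vert us_sum]] := birkhoff hu.
1,2: exists us; split => // l; rewrite leqn0 => /eqP -> a b.
1,2: by rewrite C0 mxE.
have [P [P_vert Pu C1P]] := chain_first_perm (ltn0Sn r) hu (And3 C0 Cu Cs).
have hu' : is_vertex r (subn_mx u P).
  by apply: vertex_subn_mx Pu P_vert _; rewrite addn1.
have [us [us_vert us_sum us_chain]] :=
  IH _ _ _ _ hu' hk (chain_shift (And3 C0 Cu Cs) Pu C1P).
exists (fun t => if t is t'.+1 then us t' else P); split.
- by case=> [|t] /= ht; [exact: P_vert | exact: us_vert].
- by rewrite big_nat_recl //= -us_sum addn_subn_mx.
- case=> [_ a b | l lk a b]; first by rewrite C0 mxE.
  by have := us_chain l lk a b; rewrite big_nat_recl //= !mxE leq_subLR.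
Qed.

End Decompositions.

(* The prefix sums of the E(i_t,j_t) form a lower chain for u. *)
Theorem lemma2p6 (n r : nat) (hn : (1 <= n)%N) (hr : (1 <= r)%N)
  (u : 'M[nat]_n) (hu : is_vertex r u) (k : nat) (hk : (k <= r)%N)
  (pos : nat -> 'I_n * 'I_n)
  (hpos : mx_le (\sum_(0 <= t < k) Emat (pos t).1 (pos t).2)%R u) :
  exists us : nat -> 'M[nat]_n,
    (forall t, (t < r)%N -> is_vertex 1 (us t)) /\
    u = (\sum_(0 <= t < r) us t)%R /\
    (forall l, (1 <= l <= k)%N ->
       mx_le (\sum_(0 <= t < l) Emat (pos t).1 (pos t).2)%R
             (\sum_(0 <= t < l) us t)%R).
Proof.
pose C l : 'M[nat]_n := (\sum_(0 <= t < l) Emat (pos t).1 (pos t).2)%R.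
have chain : lower_chain k pos u C.
  split=> [|l lk a b|l _].
  - by rewrite /C big_geq.
  - apply: leq_trans (hpos a b); rewrite !summxE.
    exact: (sum_prefix_le (fun t => Emat (pos t).1 (pos t).2 a b)).
  - by rewrite /C big_nat_recr //=; apply: mx_le_refl.
have [us [us_vert us_sum us_chain]] := refined_decomposition hn hu hk chain.
by exists us; split => //; split => // l /andP[_ lk]; apply: us_chain.
Qed.
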